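(* Let $k\ge3$ be odd, $p\in[0,1]$ and $q\in[0,1]$, and consider the mean-field Node-Majority process on the infinite tree $\mathcal T$ with root $v_0$ started from i.i.d. initial states with $\Pr(x_v^{(0)}=\mathcal R)=q$. Then $$\lim_{t\to\infty}\Pr(x_{v_0}^{(t)}=\mathcal R)=\begin{cases}\hat\varphi^+_{p,k} & \text{if } p<p_k^\star \text{ and } q>\hat\varphi^-_{p,k},\\ 0 & \text{if } p<p_k^\star\text{ and } q<\hat\varphi^-_{p,k},\\ 0 & \text{if } p>p_k^\star.\end{cases}$$
   Context: $\mathcal T$ is the infinite rooted tree with root $v_0$ in which every vertex has exactly $k$ children. Each vertex $v$ has a state $x_v^{(t)}\in\{\mathcal R,\mathcal B\}$ at each round $t\in\mathbb N_0$. At $t=0$ each vertex is $\mathcal R$ with probability $q$ independently. For $t\ge0$, each vertex $v$ independently of everything else becomes $\mathcal B$ at round $t+1$ with probability $p$; otherwise $x_v^{(t+1)}$ is the majority among the states $x_w^{(t)}$ of its $k$ children. Let $F_{p,k}(x)=\Pr[\mathrm{Bin}(k,(1-p)x)\ge(k+1)/2]$ and $\widehat F_{p,k}(x)=(1-p)\Pr[\mathrm{Bin}(k,x)\ge(k+1)/2]$ for $x\in[0,1]$. $p_k^\star\in[1/9,1/2)$ is the (unique) value such that for $0\le p<p_k^\star$ the equation $F_{p,k}(x)=x$ on $[0,1]$ has exactly three solutions, for $p=p_k^\star$ exactly two, and for $p>p_k^\star$ only $0$. For $0\le p<p_k^\star$ the equation $\widehat F_{p,k}(x)=x$ on $[0,1]$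 has exactly three solutions $0<\hat\varphi^-_{p,k}<\hat\varphi^+_{p,k}$. *)

From HB Require Import structures.
From mathcomp Require Import all_boot all_order all_algebra.
From mathcomp Require Import all_classical all_reals all_analysis.
Set Implicit Arguments. Unset Strict Implicit. Unset Printing Implicit Defensive.
Import Order.TTheory GRing.Theory Num.Theory.
Local Open Scope ring_scope.

Definition binom_tail {R : realType} (k : nat) (y : R) : R :=
  \sum_(i < k.+1 | ((k.+1)./2 <= i)%N) ('C(k, i))%:R * y ^+ i * (1 - y) ^+ (k - i).

Definition F_pk {R : realType} (p : R) (k : nat) (x : R) : R :=
  binom_tail k ((1 - p) * x).

Definition hatF_pk {R : realType} (p : R) (k : nat) (x : R) : R :=
  (1 - p) * binom_tail k x.

Definition exactly_n_fixpoints {R : realType} (f : R -> R) (n : nat) : Prop :=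
  exists s : seq R, uniq s /\ size s = n /\
    forall x : R, ((0 <= x <= 1) /\ f x = x) <-> x \in s.

Definition is_pstar {R : realType} (k : nat) (ps : R) : Prop :=
  1 / 9 <= ps < 1 / 2 /\
  (forall p : R, 0 <= p < ps -> exactly_n_fixpoints (F_pk p k) 3) /\
  exactly_n_fixpoints (F_pk ps k) 2 /\
  (forall p : R, ps < p <= 1 ->
     forall x : R, ((0 <= x <= 1) /\ F_pk p k x = x) <-> x = 0).

(** The mean-field Node-Majority process, restricted to the finite part of
    the randomness that determines the root state at round t.
    Vertices of the k-ary tree are words over 'I_k; the children of w are
    the words i :: w.  words k t lists all vertices of depth <= t. *)
Fixpoint words (k t : nat) : seq (seq 'I_k) :=
  match t with
  | 0 => [:: [::]]
  | t'.+1 => [::] :: [seq i :: w | i <- enum 'I_k, w <- words k t']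
  end.

Definition vert (k t : nat) := seq_sub (words k t).

(** An outcome assigns one boolean to each vertex w of depth d <= t:
    - if d = t, it is the initial state of w (true = R), drawn w.p. q;
    - if d < t, it is the coin "w becomes B at round t - d", drawn w.p. p.
    These are exactly the independent variables on which x_{v0}^{(t)}
    depends. *)
Definition outcome (k t : nat) := {ffun vert k t -> bool}.

Definition look (k t : nat) (om : outcome k t) (w : seq 'I_k) : bool :=
  match @insub _ (fun x => x \in words k t) (vert k t) w with
  | Some v => om v
  | None => false
  end.

Definition majority (k : nat) (s : seq bool) : bool := ((k.+1)./2 <= count id s)%N.

(** state om w s = x_w^{(s)} (true = R), for w at depth t - s. *)
Fixpoint state (k t : nat) (om : outcome k t) (w : seq 'I_k) (s : nat) : bool :=
  match s with
  | 0 => look om w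
  | s'.+1 => ~~ look om w && majority k [seq state om (i :: w) s' | i <- enum 'I_k]
  end.

Definition weight {R : realType} (p q : R) (k t : nat) (om : outcome k t) : R :=
  \prod_(v : vert k t)
    (if size (val v) == t then (if om v then q else 1 - q)
     else (if om v then p else 1 - p)).

Definition root_red_prob {R : realType} (p q : R) (k t : nat) : R :=
  \sum_(om : outcome k t) weight p q om * (if state om [::] t then 1 else 0).

(* Conditioning on the coin of the root and on the k independent subtrees
   hanging from its children gives Pr(x_{v0}^(t+1) = R) = hatF(Pr(x_{v0}^(t) = R)),
   so the probabilities form the orbit of q under the increasing continuous map
   hatF, which converges monotonically to the first fixed point met in the
   direction of the sign of hatF(x) - x.  That sign is negative on (0, phi^-)
   because hatF(x) = O(x^2), negative on (phi^+, 1] because hatF(1) <= 1, and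
   positive on (phi^-, phi^+) because a positive fixed point y of F_{p'} with
   p < p' < p* gives hatF((1 - p') y) > (1 - p') y.  For p > p* it is negative on
   all of (0, 1]: a fixed point x of hatF makes Pr[Bin(k, x) >= (k+1)/2] a fixed
   point of F_p. *)

From HB Require Import structures.
From mathcomp Require Import all_boot all_order all_algebra.
From mathcomp Require Import all_classical all_reals all_analysis.
From mathcomp Require Import ring lra.
Import Order.TTheory GRing.Theory Num.Theory.
Import numFieldNormedType.Exports.
Local Open Scope ring_scope.

Section Words.
Variable k : nat.

Lemma mem_words t w : (w \in words k t) = (size w <= t)%N.
Proof.
elim: t w => [|t IH] [|i w] //=; rewrite ?inE //= ltnS -IH.
apply/allpairsP/idP => [[[j u] /= [_ u_in [_ ->]]] //|w_in].
by exists (i, w); rewrite mem_enum.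
Qed.

Lemma uniq_words t : uniq (words k t).
Proof.
elim: t => //= t IH; rewrite allpairs_uniq ?enum_uniq ?andbT //.
  by apply/allpairsP => -[[j u] /= [_ _ E]].
by move=> [a b] [c d] _ _ /= [-> ->].
Qed.

Lemma perm_words_succ t :
  perm_eq (words k t.+1) ([::] :: [seq rcons w i | w <- words k t, i <- enum 'I_k]).
Proof.
apply: uniq_perm; first exact: uniq_words.
  rewrite /= allpairs_uniq ?uniq_words ?enum_uniq ?andbT //.
  - by apply/allpairsP => -[[u j] /= [_ _ /(congr1 size)]]; rewrite size_rcons.
  - by move=> [a b] [c d] _ _ /= /rcons_inj [-> ->].
case/lastP => [|w i]; first by rewrite mem_words !inE.
rewrite mem_words size_rcons ltnS in_cons -size_eq0 size_rcons /=.
apply/idP/allpairsP => [w_in|[[u j] /= [u_in _ /rcons_inj [-> _]]]]; last first.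
  by rewrite -mem_words.
by exists (w, i); rewrite /= mem_enum mem_words.
Qed.

Lemma big_vert (T : Type) (idx : T) (op : Monoid.law idx) t (F : seq 'I_k -> T) :
  \big[op/idx]_(v : vert k t) F (val v) = \big[op/idx]_(w <- words k t) F w.
Proof.
rewrite -[in RHS](val_seq_sub_enum (uniq_words t)) big_map.
by rewrite /index_enum !unlock.
Qed.

Lemma look_val t (om : outcome k t) (v : vert k t) : look om (val v) = om v.
Proof. by rewrite /look valK. Qed.

Lemma look_deep t (om : outcome k t) w : (t < size w)%N -> look om w = false.
Proof. by move=> w_deep; rewrite /look insubN // mem_words -ltnNge. Qed.

End Words.

Definition vertex_weight {R : realType} (p q : R) (t d : nat) (b : bool) : R :=
  if d == t then (if b then q else 1 - q) else (if b then p else 1 - p).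

Definition tree_weight {R : realType} (p q : R) k t (g : seq 'I_k -> bool) : R :=
  \prod_(w <- words k t) vertex_weight p q t (size w) (g w).

Fixpoint tree_state k (g : seq 'I_k -> bool) (w : seq 'I_k) (s : nat) : bool :=
  if s is s'.+1 then ~~ g w && majority k [seq tree_state k g (i :: w) s' | i <- enum 'I_k]
  else g w.

Arguments tree_weight {R} p q {k} t g.
Arguments tree_state {k} g w s.

Lemma weight_look {R : realType} (p q : R) k t (om : outcome k t) :
  weight p q om = tree_weight p q t (look om).
Proof.
by rewrite /tree_weight -big_vert; apply: eq_bigr => v _; rewrite look_val.
Qed.

Lemma state_look k t (om : outcome k t) w s : state om w s = tree_state (look om) w s.
Proof.
elim: s w => //= s IH w; congr (_ && majority _ _).
by apply: eq_map => i; rewrite IH.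
Qed.

Section Glue.
Variables k t : nat.

(* Words are written from the vertex up to the root, so the last letter of a
   nonempty word is the child of the root whose subtree contains it. *)
Definition glue (b : bool) (f : {ffun 'I_k -> outcome k t}) (w : seq 'I_k) : bool :=
  if rev w is i :: w' then look (f i) (rev w') else b.

Definition join_outcome (bf : bool * {ffun 'I_k -> outcome k t}) : outcome k t.+1 :=
  [ffun v => glue bf.1 bf.2 (val v)].

Definition split_outcome (om : outcome k t.+1) : bool * {ffun 'I_k -> outcome k t} :=
  (look om [::], [ffun i => [ffun v : vert k t => look om (rcons (val v) i)]]).

Lemma glue_rcons b f w i : glue b f (rcons w i) = look (f i) w.
Proof. by rewrite /glue rev_rcons revK. Qed.

Lemma look_join bf : look (join_outcome bf) = glue bf.1 bf.2.
Proof.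
apply: funext => w; have [w_in|] := boolP (w \in words k t.+1).
  by rewrite -[w]/(val (Sub w w_in : vert k t.+1)) look_val ffunE.
rewrite mem_words -ltnNge => w_deep; rewrite look_deep //.
case/lastP: w w_deep => [//|w i]; rewrite size_rcons ltnS => w_deep.
by rewrite glue_rcons look_deep.
Qed.

Lemma look_split om i w : look ((split_outcome om).2 i) w = look om (rcons w i).
Proof.
have [w_in|] := boolP (w \in words k t).
  by rewrite -[w]/(val (Sub w w_in : vert k t)) look_val /= !ffunE.
by rewrite mem_words -ltnNge => w_deep; rewrite !look_deep // size_rcons ltnS.
Qed.

Lemma split_outcomeK : cancel split_outcome join_outcome.
Proof.
move=> om; apply/ffunP => v; rewrite ffunE -look_val.
by case/lastP: (val v) => [//|w i]; rewrite glue_rcons look_split.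
Qed.

Lemma join_outcomeK : cancel join_outcome split_outcome.
Proof.
move=> [b f]; rewrite /split_outcome look_join; congr (_, _).
by apply/ffunP => i; apply/ffunP => v; rewrite !ffunE glue_rcons look_val.
Qed.

Lemma tree_weight_glue {R : realType} (p q : R) b f :
  tree_weight p q t.+1 (glue b f) =
    (if b then p else 1 - p) * \prod_i tree_weight p q t (look (f i)).
Proof.
rewrite /tree_weight (perm_big _ (perm_words_succ k t)) big_cons /=; congr (_ * _).
rewrite big_allpairs_dep /= exchange_big /= big_enum /=.
apply: eq_bigr => i _; apply: eq_bigr => w _.
by rewrite /vertex_weight size_rcons eqSS glue_rcons.
Qed.

Lemma tree_state_glue b f w i s :
  tree_state (glue b f) (rcons w i) s = tree_state (look (f i)) w s.
Proof.
elim: s w => [|s IH] w /=; rewrite glue_rcons // -?rcons_cons.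
by congr (_ && majority _ _); apply: eq_map => j; rewrite -rcons_cons IH.
Qed.

End Glue.

Arguments glue {k t} b f w.
Arguments join_outcome {k t} bf.
Arguments split_outcome {k t} om.

Lemma root_red_prob_succE {R : realType} (p q : R) k t :
  root_red_prob p q k t.+1 = (1 - p) *
    \sum_(f : {ffun 'I_k -> outcome k t}) (\prod_i weight p q (f i)) *
       (if majority k [seq state (f i) [::] t | i <- enum 'I_k] then 1 else 0).
Proof.
rewrite /root_red_prob (reindex join_outcome); last first.
  by exists split_outcome => x _; [apply: join_outcomeK|apply: split_outcomeK].
rewrite -(pair_bigA _ (fun b f => weight p q (join_outcome (b, f)) *
  (if state (join_outcome (b, f)) [::] t.+1 then 1 else 0))) big_bool /=.
rewrite big1 ?add0r => [|f _]; last by rewrite look_join /= mulr0.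
rewrite mulr_sumr; apply: eq_bigr => f _.
rewrite weight_look look_join tree_weight_glue -mulrA /=.
have -> : [seq state (join_outcome (false, f)) [:: i] t | i <- enum 'I_k] =
          [seq state (f i) [::] t | i <- enum 'I_k].
  apply: eq_map => i.
  by rewrite !state_look look_join -[[:: i]]/(rcons [::] i) tree_state_glue.
by congr (_ * (_ * _)); apply: eq_bigr => i _; rewrite weight_look.
Qed.

Lemma count_enum_card (T : finType) (P : pred T) : count P (enum T) = #|[set i | P i]|.
Proof.
have -> : [set i | P i] = [set x in P] by apply/setP => i; rewrite !inE.
by rewrite cardsE cardE -size_filter enumT /enum_mem.
Qed.

Lemma sum_set_card {V : nmodType} k (F : nat -> V) :
  \sum_(A : {set 'I_k}) F #|A| = \sum_(i < k.+1) F i *+ 'C(k, i).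
Proof.
rewrite (partition_big (fun A : {set 'I_k} => (inord #|A| : 'I_k.+1)) predT) //=.
apply: eq_bigr => i _; rewrite (eq_bigl (fun A : {set 'I_k} => #|A| == i)) => [|A].
  rewrite (eq_bigr (fun _ => F i)) => [|A /eqP -> //]; rewrite sumr_const.
  have := card_draws 'I_k i; rewrite card_ord => <-.
  by congr (_ *+ _); apply: eq_card => A; rewrite !inE.
rewrite -(inj_eq val_inj) /= inordK // ltnS.
by have := max_card (mem A); rewrite card_ord.
Qed.

Lemma sum_ffun_prod {R : comPzSemiRingType} {V : finType} (F : V -> bool -> R) :
  \sum_(om : {ffun V -> bool}) \prod_v F v (om v) = \prod_v (F v true + F v false).
Proof. by rewrite -bigA_distr_bigA; apply: eq_bigr => v _; rewrite big_bool. Qed.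

Lemma indicator_majority_sets {R : comPzSemiRingType} k (b : 'I_k -> bool) :
  (if majority k [seq b i | i <- enum 'I_k] then 1 else 0 : R) =
  \sum_(A : {set 'I_k}) (if ((k.+1)./2 <= #|A|)%N then 1 else 0) *
     \prod_i (if b i == (i \in A) then 1 else 0).
Proof.
rewrite /majority count_map count_enum_card (bigD1 [set i | b i]) //=.
rewrite big1 => [|i _]; last by rewrite inE eqxx.
rewrite mulr1 big1 ?addr0 // => A A_neq.
have [i bi_neq] : exists i, b i != (i \in A).
  apply/existsP; rewrite -negb_forall; apply: contra A_neq => /forallP b_eq.
  by apply/eqP/setP => i; rewrite inE; apply/esym/eqP/b_eq.
by rewrite (bigD1 i) //= (negbTE bi_neq) mul0r mulr0.
Qed.

Section MajorityIID.
Context {R : realType} {X : finType} {W : X -> R} {S : pred X} {r : R}.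
Hypotheses (W1 : \sum_x W x = 1) (WS : \sum_x W x * (if S x then 1 else 0) = r).

Lemma sum_prod_pattern k (A : {set 'I_k}) :
  \sum_(f : {ffun 'I_k -> X}) \prod_i (W (f i) * (if S (f i) == (i \in A) then 1 else 0)) =
  r ^+ #|A| * (1 - r) ^+ (k - #|A|).
Proof.
rewrite -(bigA_distr_bigA (fun i x => W x * (if S x == (i \in A) then 1 else 0))).
rewrite (bigID (mem A)) /= (eq_bigr (fun _ => r)) => [|i iA]; last first.
  by rewrite iA -WS; apply: eq_bigr => x _; rewrite eqb_id.
rewrite [X in _ * X](eq_bigr (fun _ => 1 - r)) => [|i iA]; last first.
  have -> : 1 - r = \sum_x (W x - W x * (if S x then 1 else 0)) by rewrite sumrB W1 WS.
  rewrite (negbTE iA); apply: eq_bigr => x _.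
  by case: (S x); rewrite /= ?mulr1 ?mulr0 ?subr0 ?subrr.
rewrite !prodr_const; congr (_ * _ ^+ _).
have := cardC (mem A); rewrite card_ord.
by move: #|mem A| #|[predC mem A]| => a c <-; rewrite addKn.
Qed.

Lemma majority_iid k :
  \sum_(f : {ffun 'I_k -> X}) (\prod_i W (f i)) *
     (if majority k [seq S (f i) | i <- enum 'I_k] then 1 else 0) = binom_tail k r.
Proof.
under eq_bigr => f _ do rewrite (indicator_majority_sets _ (fun i => S (f i))) mulr_sumr.
rewrite exchange_big /= (eq_bigr (fun A : {set 'I_k} =>
  (if ((k.+1)./2 <= #|A|)%N then 1 else 0) * (r ^+ #|A| * (1 - r) ^+ (k - #|A|)))).
  rewrite (sum_set_card _ (fun j => (if ((k.+1)./2 <= j)%N then 1 else 0) *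
    (r ^+ j * (1 - r) ^+ (k - j)))) /binom_tail [RHS]big_mkcond /=.
  apply: eq_bigr => i _; case: ifP => _; last by rewrite !mul0r mul0rn.
  by rewrite mul1r -[LHS]mulr_natl mulrA.
move=> A _; rewrite -sum_prod_pattern mulr_sumr.
by apply: eq_bigr => f _; rewrite mulrCA big_split.
Qed.

End MajorityIID.

Lemma sum_weight {R : realType} (p q : R) k t : \sum_(om : outcome k t) weight p q om = 1.
Proof.
rewrite (sum_ffun_prod (fun v b => vertex_weight p q t (size (val v)) b)).
by apply: big1 => v _; rewrite /vertex_weight; case: ifP => _; rewrite subrKC.
Qed.

Lemma root_red_prob_succ {R : realType} (p q : R) k t :
  root_red_prob p q k t.+1 = hatF_pk p k (root_red_prob p q k t).
Proof.
rewrite root_red_prob_succE /hatF_pk; congr (_ * _).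
exact: (majority_iid (S := fun om => state om [::] t) (sum_weight p q k t) erefl).
Qed.

Lemma root_red_prob0 {R : realType} (p q : R) k : root_red_prob p q k 0 = q.
Proof.
pose G (v : vert k 0) (b : bool) : R :=
  vertex_weight p q 0 (size (val v)) b * (if b then 1 else 0).
transitivity (\sum_(om : outcome k 0) \prod_v G v (om v)).
  apply: eq_bigr => om _; rewrite big_split /=; congr (_ * _).
  rewrite (eq_bigr (fun v => if look om (val v) then 1 else 0)) => [|v _]; last first.
    by rewrite look_val.
  by rewrite (big_vert k R 1 *%R 0 (fun w => if look om w then 1 else 0)) big_seq1.
rewrite sum_ffun_prod (big_vert k R 1 *%R 0 (fun w => vertex_weight p q 0 (size w) true * 1 +
  vertex_weight p q 0 (size w) false * 0)) big_seq1.
by rewrite mulr1 mulr0 addr0.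
Qed.

Section BinomTail.
Context {R : realType} (k : nat).
Implicit Types x y : R.

Lemma binom_tail_ge0 x : 0 <= x <= 1 -> 0 <= binom_tail k x.
Proof.
by case/andP=> x0 x1; apply: sumr_ge0 => i _; rewrite !mulr_ge0 ?exprn_ge0 ?subr_ge0.
Qed.

Lemma binom_tail_le1 x : 0 <= x <= 1 -> binom_tail k x <= 1.
Proof.
case/andP=> x0 x1.
apply: (@le_trans _ _ ((1 - x + x) ^+ k)); last by rewrite subrK expr1n.
rewrite exprDn (eq_bigr (fun i : 'I_k.+1 => 'C(k, i)%:R * x ^+ i * (1 - x) ^+ (k - i)))
  => [|i _]; last by rewrite -mulr_natl mulrA mulrAC.
rewrite [X in _ <= X](bigID (fun i : 'I_k.+1 => ((k.+1)./2 <= i)%N)) /= lerDl.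
by apply: sumr_ge0 => i _; rewrite !mulr_ge0 ?exprn_ge0 ?subr_ge0.
Qed.

(* Coupling: draw each of the k coins in {0, 1, 2} with probabilities
   x, y - x, 1 - y; "coin = 0" has probability x and implies "coin < 2",
   which has probability y. *)
Lemma binom_tail_le x y : 0 <= x -> x <= y -> y <= 1 -> binom_tail k x <= binom_tail k y.
Proof.
move=> x0 xy y1.
pose W (i : 'I_3) := if i == 0 :> nat then x else if i == 1 :> nat then y - x else 1 - y.
have W1 : \sum_i W i = 1 by rewrite !big_ord_recl big_ord0 /W /=; ring.
have Wx : \sum_i W i * (if i == 0 :> nat then 1 else 0) = x.
  by rewrite !big_ord_recl big_ord0 /W /=; ring.
have Wy : \sum_i W i * (if (i < 2)%N then 1 else 0) = y.
  by rewrite !big_ord_recl big_ord0 /W /=; ring.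
rewrite -(majority_iid W1 Wx) -(majority_iid W1 Wy).
apply: ler_sum => f _; apply: ler_wpM2l.
  by apply: prodr_ge0 => i _; rewrite /W; do 2?case: ifP => _; rewrite ?subr_ge0.
case: ifP => [maj_x|]; last by case: ifP.
rewrite ifT //; apply: leq_trans maj_x _; rewrite !count_map.
by apply: sub_count => i /= /eqP ->.
Qed.

Lemma binom_tail0 : (0 < k)%N -> binom_tail k 0 = 0 :> R.
Proof.
move=> k0; apply: big1 => -[[|i] _] /= i_ge; first by case: k k0 i_ge.
by rewrite expr0n /= mulr0 mul0r.
Qed.

Lemma binom_tail_le_sq x : (3 <= k)%N -> 0 <= x <= 1 -> binom_tail k x <= 2 ^+ k * x ^+ 2.
Proof.
move=> k3 /andP [x0 x1].
have -> : 2 ^+ k = \sum_(i < k.+1) 'C(k, i)%:R :> R.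
  by rewrite exprDn; apply: eq_bigr => i _; rewrite !expr1n mul1r.
rewrite mulr_suml [X in _ <= X](bigID (fun i : 'I_k.+1 => ((k.+1)./2 <= i)%N)) /=.
apply: ler_wpDr; first by apply: sumr_ge0 => i _; rewrite mulr_ge0 ?exprn_ge0.
apply: ler_sum => i i_ge; rewrite -mulrA ler_wpM2l //.
have i2 : (2 <= i)%N by apply: leq_trans i_ge; rewrite -[2%N]/(4./2) half_leq.
rewrite -(subnKC i2) exprD -mulrA ler_piMr ?exprn_ge0 //.
by rewrite mulr_ile1 ?exprn_ge0 ?exprn_ile1 ?subr_ge0 // lerBlDr lerDl.
Qed.

End BinomTail.

Local Open Scope classical_set_scope.

Section FixedPoints.
Context {R : realType} {f : R -> R} (f_cont : continuous f).

Lemma fixpoint_between {a b} : a <= b -> (f a - a) * (f b - b) <= 0 ->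
  exists2 c, a <= c <= b & f c = c.
Proof.
move=> ab sign_change.
have g_cont : {within `[a, b], continuous (fun x => f x - x)}.
  by apply: continuous_subspaceT => x; apply: cvgB; [exact: f_cont|exact: cvg_id].
have [|c c_ab gc0] := @IVT R (fun x => f x - x) a b 0 ab g_cont.
  apply/andP; split; [rewrite ge_min|rewrite le_max]; apply: contraLR sign_change;
    by rewrite negb_or -!ltNge => /andP[ua wb]; nra.
by exists c; [rewrite in_itv /= in c_ab|apply/eqP; rewrite -subr_eq0 gc0].
Qed.

Lemma fixfree_same_sign {x y} : x <= y -> (forall c, x <= c <= y -> f c != c) ->
  0 < (f x - x) * (f y - y).
Proof.
move=> xy fixfree; rewrite ltNge; apply/negP => /(fixpoint_between xy) [c c_xy fc].
by move: (fixfree c c_xy); rewrite fc eqxx.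
Qed.

Lemma cvg_orbit_unique_fixpoint {u : nat -> R} {lo hi L : R} :
  (forall n, u n.+1 = f (u n)) -> lo <= u 0 <= hi ->
  (forall x, lo <= x <= hi -> lo <= f x <= hi) ->
  ((forall x, lo <= x <= hi -> x <= f x) \/ (forall x, lo <= x <= hi -> f x <= x)) ->
  (forall x, lo <= x <= hi -> f x = x -> x = L) ->
  u @ \oo --> L.
Proof.
move=> u_succ u0 f_stable f_side fix_uniq.
have u_in n : lo <= u n <= hi by elim: n => // n IH; rewrite u_succ; apply: f_stable.
have u_cvg : cvgn u.
  case: f_side => side.
    apply: nondecreasing_is_cvgn.
      by apply/nondecreasing_seqP => n; rewrite u_succ; apply: side.
    by exists hi => _ [n _ <-]; case/andP: (u_in n).
  apply: nonincreasing_is_cvgn.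
    by apply/nonincreasing_seqP => n; rewrite u_succ; apply: side.
  by exists lo => _ [n _ <-]; case/andP: (u_in n).
have lim_in : lo <= limn u <= hi.
  by apply/andP; split; [apply: limr_ge|apply: limr_le] => //; near=> n; case/andP: (u_in n).
have lim_fix : f (limn u) = limn u.
  have f_u_cvg : (f \o u) @ \oo --> f (limn u) by apply: continuous_cvg => //; apply: f_cont.
  have u_shift : (fun n => u n.+1) @ \oo --> limn u by rewrite cvg_shiftS.
  have E : (fun n => u n.+1) = f \o u by apply: funext => n; rewrite u_succ.
  by rewrite E in u_shift; apply: cvg_unique f_u_cvg u_shift.
by rewrite -(fix_uniq _ lim_in lim_fix).
Unshelve. all: by end_near.
Qed.

End FixedPoints.

Lemma continuous_hatF {R : realType} (p : R) k : continuous (hatF_pk p k).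
Proof.
pose P : {poly R} := (1 - p)%:P * \sum_(i < k.+1 | ((k.+1)./2 <= i)%N)
  'C(k, i)%:R%:P * 'X^i * (1 - 'X) ^+ (k - i).
have -> : hatF_pk p k = horner P.
  apply: funext => x; rewrite /P hornerM hornerC horner_sum.
  by congr (_ * _); apply: eq_bigr => i _; rewrite !hornerE.
exact: continuous_horner.
Qed.

Section HatF.
Context {R : realType} {p : R} {k : nat}.
Hypotheses (p01 : 0 <= p <= 1) (k3 : (3 <= k)%N).
Local Notation f := (hatF_pk p k).

Lemma hatF0 : f 0 = 0.
Proof. by rewrite /hatF_pk binom_tail0 ?mulr0 // (leq_trans _ k3). Qed.

Lemma hatF_in01 x : 0 <= x <= 1 -> 0 <= f x <= 1.
Proof.
move=> x01; have := binom_tail_ge0 k x x01; have := binom_tail_le1 k x x01.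
by rewrite /hatF_pk; case/andP: p01 => *; apply/andP; split; nra.
Qed.

Lemma hatF1_le1 : f 1 <= 1.
Proof. by have /andP[] : 0 <= f 1 <= 1 by apply: hatF_in01; rewrite ler01 lexx. Qed.

Lemma hatF_le {x y} : 0 <= x -> x <= y -> y <= 1 -> f x <= f y.
Proof.
move=> x0 xy y1; rewrite /hatF_pk ler_wpM2l ?binom_tail_le //.
by case/andP: p01 => _; rewrite subr_ge0.
Qed.

Lemma hatF_lt_id_near0 y : 0 < y -> 2 ^+ k * y < 1 -> f y < y.
Proof.
move=> y0 y_small; have two_k : 1 <= 2 ^+ k :> R by rewrite exprn_ege1 // ler1n.
have y01 : 0 <= y <= 1 by apply/andP; split; nra.
have := binom_tail_le_sq k y k3 y01; have := binom_tail_ge0 k y y01.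
by rewrite /hatF_pk; case/andP: p01 => *; nra.
Qed.

Lemma hatF_lt_id_fixfree x : 0 <= x <= 1 -> (forall c, x <= c <= 1 -> f c != c) -> f x < x.
Proof.
case/andP=> x0 x1 fixfree.
have f1 : f 1 < 1 by rewrite lt_neqAle fixfree ?x1 ?lexx ?hatF1_le1.
have := fixfree_same_sign (continuous_hatF p k) x1 fixfree.
by rewrite nmulr_lgt0 ?subr_lt0.
Qed.

Lemma root_red_prob_cvg q lo hi L : 0 <= lo -> hi <= 1 -> lo <= q <= hi ->
  lo <= f lo -> f hi <= hi ->
  ((forall x, lo <= x <= hi -> x <= f x) \/ (forall x, lo <= x <= hi -> f x <= x)) ->
  (forall x, lo <= x <= hi -> f x = x -> x = L) ->
  (fun t => root_red_prob p q k t) @ \oo --> L.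
Proof.
move=> lo0 hi1 q_in f_lo f_hi f_side fix_uniq.
apply: (cvg_orbit_unique_fixpoint (continuous_hatF p k) _ _ _ f_side fix_uniq).
- exact: root_red_prob_succ.
- by rewrite root_red_prob0.
- move=> x /andP[lo_x x_hi]; apply/andP; split.
    by apply: le_trans f_lo (hatF_le lo0 lo_x _); apply: le_trans hi1.
  by apply: le_trans (hatF_le _ x_hi hi1) f_hi; apply: le_trans lo_x.
Qed.

Section Bistable.
Context {phim phip : R}.
Hypotheses (phim_gt0 : 0 < phim) (phim_lt_phip : phim < phip)
  (fixE : forall x, (0 <= x <= 1) /\ f x = x <-> x = 0 \/ x = phim \/ x = phip)
  (above_id : exists2 z, 0 < z <= 1 & z < f z).

Let phi_bounds : [/\ 0 < phim, phim < phip & phip <= 1].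
Proof. by case: (proj2 (fixE phip) (or_intror (or_intror erefl))) => /andP[]. Qed.

Let fixed_phim : f phim = phim.
Proof. exact: (proj2 (fixE phim) (or_intror (or_introl erefl))).2. Qed.

Let fixed_phip : f phip = phip.
Proof. exact: (proj2 (fixE phip) (or_intror (or_intror erefl))).2. Qed.

Lemma hatF_fixfree_gap {x y} : 0 < x -> y <= 1 ->
  [\/ y < phim, phim < x /\ y < phip | phip < x] -> forall c, x <= c <= y -> f c != c.
Proof.
move=> x0 y1 gap c /andP[xc cy]; apply/eqP => fc; case: phi_bounds => *.
have c01 : 0 <= c <= 1 by apply/andP; split; lra.
by case/fixE: (conj c01 fc) => [|[|]] c_eq; subst c; case: gap => [?|[? ?]|?]; lra.
Qed.

Lemma hatF_lt_id_low x : 0 < x -> x < phim -> f x < x.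
Proof.
move=> x0 x_lt; case: phi_bounds => *.
have two_k : 1 <= 2 ^+ k :> R by rewrite exprn_ege1 // ler1n.
pose y := x / 2 ^+ k.
have y0 : 0 < y by rewrite divr_gt0 // exprn_gt0.
have yx : y <= x by rewrite ler_pdivrMr ?exprn_gt0 // ler_peMr // ltW.
have x1 : x <= 1 by lra.
have fy : f y < y by apply: hatF_lt_id_near0; rewrite // mulrC divfK ?expf_neq0 //; lra.
have := fixfree_same_sign (continuous_hatF p k) yx (hatF_fixfree_gap y0 x1 (Or31 _ _ x_lt)).
by rewrite nmulr_rgt0 ?subr_lt0.
Qed.

Lemma hatF_lt_id_high x : phip < x -> x <= 1 -> f x < x.
Proof.
move=> x_gt x1; case: phi_bounds => *.
have x0 : 0 < x by lra.
by apply: hatF_lt_id_fixfree; [rewrite ltW|apply: hatF_fixfree_gap (Or33 _ _ x_gt)].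
Qed.

Lemma hatF_gt_id_mid x : phim < x -> x < phip -> x < f x.
Proof.
move=> x_gt x_lt; case: phi_bounds => _ _ phip1.
have [z /andP[z0 z1] fz] := above_id.
have z_ne : f z != z by rewrite gt_eqF.
have [z_lt|z_ge] := ltP z phim.
  by move: (hatF_lt_id_low z z0 z_lt); rewrite ltNge (ltW fz).
have [z_gt|z_le] := ltP phip z.
  by move: (hatF_lt_id_high z z_gt z1); rewrite ltNge (ltW fz).
have {z_ge} z_gt : phim < z.
  by rewrite lt_neqAle z_ge andbT; apply: contraNneq z_ne => <-; rewrite fixed_phim.
have {z_le} z_lt : z < phip.
  by rewrite lt_neqAle z_le andbT; apply: contraNneq z_ne => ->; rewrite fixed_phip.
have x0 : 0 < x := lt_trans phim_gt0 x_gt.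
have [xz|zx] := leP x z.
  have := fixfree_same_sign (continuous_hatF p k) xz
    (hatF_fixfree_gap x0 z1 (Or32 _ _ (conj x_gt z_lt))).
  by rewrite pmulr_lgt0 ?subr_gt0.
have := fixfree_same_sign (continuous_hatF p k) (ltW zx)
  (hatF_fixfree_gap z0 (ltW (lt_le_trans x_lt phip1)) (Or32 _ _ (conj z_gt x_lt))).
by rewrite pmulr_rgt0 ?subr_gt0.
Qed.

Lemma root_red_prob_cvg_phip q : phim < q -> q <= 1 ->
  (fun t => root_red_prob p q k t) @ \oo --> phip.
Proof.
move=> q_gt q1; case: phi_bounds => phim0 phim_lt phip1.
have fix_phip x : phim < x -> x <= 1 -> f x = x -> x = phip.
  move=> x_gt x1 fx; have x01 : 0 <= x <= 1 by apply/andP; split; lra.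
  by case/fixE: (conj x01 fx) => [|[|]] x_eq //; lra.
have [q_lt|q_ge] := ltP q phip.
  apply: (root_red_prob_cvg q q phip phip) => //; first by rewrite ltW // (lt_trans phim0).
  - by rewrite lexx ltW.
  - exact/ltW/hatF_gt_id_mid.
  - by rewrite fixed_phip.
  - left=> x /andP[qx xp]; have [->|x_ne] := eqVneq x phip; first by rewrite fixed_phip.
    by rewrite ltW // hatF_gt_id_mid ?(lt_le_trans q_gt) // lt_neqAle x_ne.
  - by move=> x /andP[qx xp]; apply: fix_phip; [exact: lt_le_trans qx|exact: le_trans phip1].
apply: (root_red_prob_cvg q phip 1 phip) => //; first by rewrite ltW // (lt_trans phim0).
- by rewrite q_ge.
- by rewrite fixed_phip.
- exact: hatF1_le1.
- right=> x /andP[px x1]; have [->|x_ne] := eqVneq x phip; first by rewrite fixed_phip.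
  by rewrite ltW // hatF_lt_id_high // lt_neqAle eq_sym x_ne.
- by move=> x /andP[px x1]; apply: fix_phip => //; exact: lt_le_trans px.
Qed.

Lemma root_red_prob_cvg0_bistable q : 0 <= q -> q < phim ->
  (fun t => root_red_prob p q k t) @ \oo --> 0.
Proof.
move=> q0 q_lt; case: phi_bounds => phim0 phim_lt phip1.
have f_le x : 0 <= x -> x < phim -> f x <= x.
  move=> x0 x_lt; have [->|x_ne0] := eqVneq x 0; first by rewrite hatF0.
  by rewrite ltW // hatF_lt_id_low // lt_neqAle eq_sym x_ne0.
apply: (root_red_prob_cvg q 0 q 0) => //.
- by apply: ltW; apply: lt_le_trans phip1; apply: lt_trans phim_lt.
- by rewrite lexx q0.
- by rewrite hatF0.
- exact: f_le.
- by right=> x /andP[x0 xq]; apply: f_le => //; exact: le_lt_trans q_lt.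
- move=> x /andP[x0 xq] fx; have x01 : 0 <= x <= 1 by apply/andP; split; lra.
  by case/fixE: (conj x01 fx) => [|[|]] x_eq //; lra.
Qed.

End Bistable.

Lemma hatF_fix0_of_gt_pstar pstar : is_pstar k pstar -> pstar < p ->
  forall x, 0 <= x <= 1 -> f x = x -> x = 0.
Proof.
case=> _ [_ [_ subcritical]] p_gt x x01 fx.
have B01 : 0 <= binom_tail k x <= 1 by rewrite binom_tail_ge0 ?binom_tail_le1.
have FB : F_pk p k (binom_tail k x) = binom_tail k x.
  by rewrite /F_pk -/(hatF_pk p k x) fx.
have p_in : pstar < p <= 1 by rewrite p_gt; case/andP: p01.
by rewrite -fx /hatF_pk ((subcritical p p_in _).1 (conj B01 FB)) mulr0.
Qed.

Lemma root_red_prob_cvg0_of_gt_pstar pstar q : is_pstar k pstar -> pstar < p ->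
  0 <= q <= 1 -> (fun t => root_red_prob p q k t) @ \oo --> 0.
Proof.
move=> pstarP p_gt q01; have fix0 := hatF_fix0_of_gt_pstar pstar pstarP p_gt.
apply: (root_red_prob_cvg q 0 1 0) => //; rewrite ?hatF0 ?hatF1_le1 //.
right=> x x01; have [->|x_ne0] := eqVneq x 0; first by rewrite hatF0.
have x0 : 0 < x by case/andP: x01 => x0 _; rewrite lt_neqAle eq_sym x_ne0.
apply/ltW/hatF_lt_id_fixfree => // c /andP[xc c1]; apply/eqP => fc.
have c0 : c = 0 by apply: fix0 fc; rewrite c1 (le_trans (ltW x0)).
by move: x0; rewrite ltNge -c0 xc.
Qed.

End HatF.

Lemma exactly_n_fixpoints_pos {R : realType} (g : R -> R) n :
  (1 < n)%N -> exactly_n_fixpoints g n -> exists2 x, 0 < x <= 1 & g x = x.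
Proof.
move=> n_gt1 [s [s_uniq [s_size s_fix]]].
have /hasP[x xs x_ne0] : has (fun x => x != 0) s.
  apply: contraLR n_gt1 => /hasPn s0; rewrite -leqNgt -s_size.
  by apply: (uniq_leq_size s_uniq (s2 := [:: 0])) => x /s0; rewrite negbK inE.
case/s_fix: xs => /andP[x0 x1] gx.
by exists x; rewrite // lt_neqAle eq_sym x_ne0 x0.
Qed.

Lemma exists_gt_hatF_of_lt_pstar {R : realType} {k : nat} {p pstar : R} :
  is_pstar k pstar -> 0 <= p -> p < pstar -> exists2 z, 0 < z <= 1 & z < hatF_pk p k z.
Proof.
case=> /andP[_ pstar_lt] [three _] p0 p_lt; pose p' := (p + pstar) / 2.
have [y /andP[y0 y1] Fy] : exists2 y, 0 < y <= 1 & F_pk p' k y = y.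
  by apply: exactly_n_fixpoints_pos (three p' _) => //; apply/andP; split; rewrite /p'; lra.
(* hatF_p((1 - p') y) = (1 - p) F_p'(y) = (1 - p) y > (1 - p') y. *)
exists ((1 - p') * y); first by apply/andP; split; rewrite /p'; nra.
by rewrite /hatF_pk -/(F_pk p' k y) Fy /p'; nra.
Qed.

Theorem theorem4p6 (R : realType) (k : nat) (p q pstar : R) :
  odd k -> (3 <= k)%N ->
  0 <= p <= 1 -> 0 <= q <= 1 ->
  is_pstar k pstar ->
  (p < pstar ->
     forall phim phip : R,
       0 < phim < phip ->
       (forall x : R, ((0 <= x <= 1) /\ hatF_pk p k x = x) <->
                      (x = 0 \/ x = phim \/ x = phip)) ->
       (phim < q -> (fun t : nat => root_red_prob p q k t) @ \oo --> (phip : R^o)) /\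
       (q < phim -> (fun t : nat => root_red_prob p q k t) @ \oo --> (0 : R^o))) /\
  (pstar < p -> (fun t : nat => root_red_prob p q k t) @ \oo --> (0 : R^o)).
Proof.
move=> _ k3 p01 q01 pstarP; case/andP: (p01) => p0 _; case/andP: (q01) => q0 q1.
split=> [p_lt phim phip /andP[phim0 phim_lt] fixE | p_gt].
  have above := exists_gt_hatF_of_lt_pstar pstarP p0 p_lt.
  split=> [q_gt|q_lt].
    exact: (root_red_prob_cvg_phip p01 k3 phim0 phim_lt fixE above q q_gt q1).
  exact: (root_red_prob_cvg0_bistable p01 k3 phim0 phim_lt fixE q q0 q_lt).
exact: (root_red_prob_cvg0_of_gt_pstar p01 k3 pstar q pstarP p_gt q01).
Qed.
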